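(* Let $(y_\beta)_{\beta>0}\subset\mathcal M$ be such that $(\beta y_\beta)$ converges vaguely on $[0,1)$ to some function $\alpha$ and $$L:=\lim_{\beta\to\infty}\int_0^1\beta y_\beta(s)ds<\infty.$$ Assume there exist $v_\beta\in[0,1)$ with $y_\beta(v_\beta)=1$ for all $\beta>0$ such that $\delta:=\lim_{\beta\to\infty}\beta(1-v_\beta)\in(0,\infty)$. Then $$\lim_{\beta\to\infty}\frac{\mathcal Q_\beta(y_\beta)}\beta=\frac12\Big((\xi'(1)+h^2)L-\int_0^1\xi''(q)\Big(\int_0^q\alpha(s)ds\Big)dq+\int_0^1\frac{dq}{L-\int_0^q\alpha(s)ds}\Big).$$
   Context: Let $(\gamma_p)_{p\ge2}$ be real with $\sum_{p\ge2}2^p\gamma_p^2<\infty$, $h\in\mathbb R$, $\xi(s)=\sum_{p\ge2}\gamma_p^2s^p$; for $\beta>0$, $\xi_\beta=\beta^2\xi$, $h_\beta=\beta h$. $\mathcal M$ is the set of distribution functions $x$ on $[0,1]$ with $x(\hat q)=1$ for some $\hat q<1$; for $x\in\mathcal M$, $\hat x(q)=\int_q^1x(s)ds$ and $\mathcal Q_\beta(x)=\frac12\big(\int_0^1(\xi'_\beta(q)+h_\beta^2)x(q)dq+\int_0^{\hat q}\frac{dq}{\hat x(q)}+\log(1-\hat q)\big)$, for any $\hat q<1$ with $x(\hat q)=1$ (independent of the choice). Vague convergence of $\beta y_\beta$ to $\alpha$ on $[0,1)$ means $\beta y_\beta(s)\to\alpha(s)$ at every continuity point $s\in[0,1)$ of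 $\alpha$. *)

From Stdlib Require Import Reals Lra ClassicalEpsilon.
From Coquelicot Require Import Coquelicot.
Open Scope R_scope.

Definition xi_term (gamma : nat -> R) (s : R) (p : nat) : R :=
  if (p <? 2)%nat then 0 else (gamma p) ^ 2 * s ^ p.

Definition xi (gamma : nat -> R) (s : R) : R := Series (xi_term gamma s).

Definition xi_beta (gamma : nat -> R) (beta : R) (s : R) : R := beta ^ 2 * xi gamma s.
Definition h_beta (h beta : R) : R := beta * h.

(* The class M: distribution functions x on [0,1] (nondecreasing, right-continuous,
   values in [0,1]) with x(qh) = 1 for some qh in [0,1). *)
Definition inM (x : R -> R) : Prop :=
  (forall s t, 0 <= s -> s <= t -> t <= 1 -> x s <= x t) /\
  (forall s, 0 <= s <= 1 -> 0 <= x s <= 1) /\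
  (forall s, 0 <= s < 1 ->
     forall eps, 0 < eps -> exists d, 0 < d /\
       forall t, s <= t < s + d -> t <= 1 -> Rabs (x t - x s) < eps) /\
  (exists qh, 0 <= qh < 1 /\ x qh = 1).

Definition xhat (x : R -> R) (q : R) : R := RInt x q 1.

Definition Q_at (gamma : nat -> R) (h beta : R) (x : R -> R) (qh : R) : R :=
  / 2 * ( RInt (fun q => (Derive (xi_beta gamma beta) q + (h_beta h beta) ^ 2) * x q) 0 1
        + RInt (fun q => / xhat x q) 0 qh
        + ln (1 - qh) ).

Definition choose_qh (x : R -> R) : R :=
  epsilon (inhabits 0) (fun qh => 0 <= qh < 1 /\ x qh = 1).

Definition Q (gamma : nat -> R) (h beta : R) (x : R -> R) : R :=
  Q_at gamma h beta x (choose_qh x).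

Definition cont_on_01 (alpha : R -> R) (s : R) : Prop :=
  forall eps, 0 < eps -> exists d, 0 < d /\
    forall t, 0 <= t < 1 -> Rabs (t - s) < d -> Rabs (alpha t - alpha s) < eps.

Definition vague_cvg (y : R -> R -> R) (alpha : R -> R) : Prop :=
  forall s, 0 <= s < 1 -> cont_on_01 alpha s ->
    is_lim (fun beta => beta * y beta s) p_infty (alpha s).

(* Write f_b = b y_b and F_b q = int_0^q f_b.  As y_b = 1 on [v_b, 1], the choice
   qh = v_b gives b xhat(q) = F_b 1 - F_b q >= b (1 - v_b) on [0, v_b] and
     Q_b(y_b) / b = 1/2 (int (xi' + h^2) f_b + int_0^{v_b} dq / (F_b 1 - F_b q) + ln (1 - v_b) / b).
   The last term vanishes since b (1 - v_b) -> delta > 0.  Vague convergence at the (dense)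
   continuity points of the nondecreasing alpha gives F_b -> A = int_0^. alpha pointwise on
   [0, 1), and monotonicity makes this uniform on each [0, c], c < 1; as the gap stays above
   delta / 2, the middle term tends to int dq / (L - A).  Integration by parts turns the first
   term into (xi'(1) + h^2) F_b 1 - int xi'' F_b, which tends to (xi'(1) + h^2) L - int xi'' A. *)

From Stdlib Require Import Reals Lra Lia ZArith Classical ClassicalEpsilon FunctionalExtensionality.
From Coquelicot Require Import Coquelicot.
Open Scope R_scope.

Definition nondecreasing_on (f : R -> R) (a b : R) : Prop :=
  forall x y, a <= x -> x <= y -> y <= b -> f x <= f y.

Lemma nondecreasing_on_sub (f : R -> R) a b c d :
  a <= c -> d <= b -> nondecreasing_on f a b -> nondecreasing_on f c d.
Proof. intros Hac Hdb Hf x y Hx Hxy Hy; apply Hf; lra. Qed.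

Lemma nondecreasing_on_mult (f g : R -> R) a b :
  nondecreasing_on f a b -> nondecreasing_on g a b ->
  (forall x, a <= x <= b -> 0 <= f x) -> (forall x, a <= x <= b -> 0 <= g x) ->
  nondecreasing_on (fun x => f x * g x) a b.
Proof.
  intros Hf Hg Pf Pg x y Hx Hxy Hy.
  apply Rmult_le_compat; [apply Pf; lra | apply Pg; lra | apply Hf | apply Hg]; lra.
Qed.

Lemma IsStepFun_const_interior (g : R -> R) (a b c : R) :
  a <= b -> (forall x, a < x < b -> g x = c) -> IsStepFun g a b.
Proof.
  intros Hab Hg. exists (cons a (cons b nil)), (cons c nil).
  unfold adapted_couple; simpl; split; [|split; [|split; [|split]]].
  - intros [|i] Hi; simpl in Hi; [simpl; lra | lia].
  - unfold Rmin; destruct (Rle_dec a b); lra.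
  - unfold Rmax; destruct (Rle_dec a b); lra.
  - reflexivity.
  - intros [|i] Hi; simpl in Hi; [exact Hg | lia].
Qed.

(* Induction on the number [N] of lattice levels: split [(a, b]] at the supremum of the
   points where [g] still takes its lowest value [c]. *)
Lemma IsStepFun_lattice_nondecreasing (e : R) (He : 0 < e) :
  forall (N : nat) (a b c : R) (g : R -> R),
  a <= b ->
  (forall x y, a < x -> x <= y -> y <= b -> g x <= g y) ->
  (forall x, a < x <= b -> exists k : Z, g x = e * IZR k) ->
  (exists k : Z, c = e * IZR k) ->
  (forall x, a < x <= b -> c <= g x) ->
  g b - c <= INR N * e -> IsStepFun g a b.
Proof.
  induction N as [|N IH]; intros a b c g Hab Hmon Hlat Hc Hcle Hbound.
  - apply (IsStepFun_const_interior g a b c Hab). intros x Hx.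
    assert (g x <= g b) by (apply Hmon; lra). assert (c <= g x) by (apply Hcle; lra).
    simpl in Hbound. lra.
  - destruct (Rle_lt_dec (c + e) (g b)) as [Hbig|Hsmall].
    2:{ apply (IsStepFun_const_interior g a b c Hab). intros x Hx.
        assert (g x <= g b) by (apply Hmon; lra). assert (c <= g x) by (apply Hcle; lra).
        destruct (Hlat x ltac:(lra)) as [kx Hkx], Hc as [kc Hkc].
        assert (Hlt : IZR kx < IZR (kc + 1)) by (rewrite plus_IZR; apply Rmult_lt_reg_l with e; lra).
        assert (Hle : IZR kc <= IZR kx) by (apply Rmult_le_reg_l with e; lra).
        apply lt_IZR in Hlt. apply le_IZR in Hle. assert (kx = kc) by lia. subst. lra. }
    set (E := fun x => a <= x <= b /\ (x = a \/ g x <= c)).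
    destruct (completeness E) as [s [Hs_ub Hs_lub]].
    { exists b. intros x [Hx _]. lra. }
    { exists a. split; [lra | left; reflexivity]. }
    assert (Has : a <= s) by (apply Hs_ub; split; [lra | left; reflexivity]).
    assert (Hsb : s <= b) by (apply Hs_lub; intros x [Hx _]; lra).
    apply StepFun_P46 with s.
    + apply (IsStepFun_const_interior g a s c Has). intros x Hx.
      assert (Hx' : exists x', E x' /\ x < x').
      { apply NNPP; intro Hn. assert (s <= x); [|lra].
        apply Hs_lub. intros z Hz. apply Rnot_lt_le. intro Hl. apply Hn. exists z; auto. }
      destruct Hx' as [x' [[Hx'1 [Hx'2|Hx'2]] Hx'3]]; [lra|].
      assert (g x <= g x') by (apply Hmon; lra). assert (c <= g x) by (apply Hcle; lra). lra.
    + apply (IH s b (c + e) g Hsb).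
      * intros x y Hx Hxy Hy. apply Hmon; lra.
      * intros x Hx. apply Hlat. lra.
      * destruct Hc as [kc Hkc]. exists (kc + 1)%Z. rewrite plus_IZR. lra.
      * intros x Hx. destruct (Rle_lt_dec (g x) c) as [Hle|Hlt].
        { assert (x <= s); [apply Hs_ub; split; [lra | right; exact Hle] | lra]. }
        destruct (Hlat x ltac:(lra)) as [kx Hkx], Hc as [kc Hkc].
        assert (Hk : IZR kc < IZR kx) by (apply Rmult_lt_reg_l with e; lra).
        apply lt_IZR in Hk. assert (IZR kc + 1 <= IZR kx) by (rewrite <- plus_IZR; apply IZR_le; lia).
        nra.
      * rewrite S_INR in Hbound. lra.
Qed.

Definition floor_grid (e r : R) : R := e * IZR (up (r / e) - 1).

Lemma up_le (r s : R) : r <= s -> (up r <= up s)%Z.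
Proof.
  intros H. destruct (archimed r) as [H1 H2], (archimed s) as [H3 H4].
  apply Z.nlt_ge. intro Hlt. assert (Hz : (up s <= up r - 1)%Z) by lia.
  apply IZR_le in Hz. rewrite minus_IZR in Hz. simpl in Hz. lra.
Qed.

Lemma floor_grid_spec (e r : R) : 0 < e -> floor_grid e r <= r < floor_grid e r + e.
Proof.
  intros He. unfold floor_grid. destruct (archimed (r / e)) as [H1 H2].
  rewrite minus_IZR. simpl. assert (r = e * (r / e)) by (field; lra). split; nra.
Qed.

Lemma up_div_le (e r s : R) : 0 < e -> r <= s -> (up (r / e) <= up (s / e))%Z.
Proof.
  intros He Hrs. apply up_le. unfold Rdiv. apply Rmult_le_compat_r; [|exact Hrs].
  left; apply Rinv_0_lt_compat; exact He.
Qed.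

Lemma Riemann_integrable_nondecreasing (f : R -> R) (a b : R) :
  a <= b -> nondecreasing_on f a b -> Riemann_integrable f a b.
Proof.
  intros Hab Hmon eps.
  set (e := eps / (2 * (b - a + 1))).
  assert (He : 0 < e) by (apply Rdiv_lt_0_compat; [apply cond_pos | lra]).
  assert (Hst : IsStepFun (fun x => floor_grid e (f x)) a b).
  { assert (Hz : (up (f a / e) <= up (f b / e))%Z) by (apply up_div_le; [|apply Hmon]; lra).
    apply (IsStepFun_lattice_nondecreasing e He (Z.to_nat (up (f b / e) - up (f a / e)))
             a b (floor_grid e (f a))); unfold floor_grid; auto.
    - intros x y Hx Hxy Hy. apply Rmult_le_compat_l; [lra|].
      apply IZR_le. assert (up (f x / e) <= up (f y / e))%Z by (apply up_div_le; [|apply Hmon]; lra).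
      lia.
    - intros x _. eexists; reflexivity.
    - eexists; reflexivity.
    - intros x Hx. apply Rmult_le_compat_l; [lra|].
      apply IZR_le. assert (up (f a / e) <= up (f x / e))%Z by (apply up_div_le; [|apply Hmon]; lra).
      lia.
    - rewrite INR_IZR_INZ, Z2Nat.id by lia. rewrite !minus_IZR. simpl. lra. }
  exists (mkStepFun Hst), (mkStepFun (StepFun_P4 a b e)). split.
  - intros t Ht. simpl. unfold fct_cte.
    destruct (floor_grid_spec e (f t) He). rewrite Rabs_right; lra.
  - rewrite StepFun_P18, Rabs_right by nra. pose proof (cond_pos eps).
    assert ((b - a) * e = eps / 2 * ((b - a) / (b - a + 1))) by (unfold e; field; lra).
    assert ((b - a) / (b - a + 1) < 1) by (apply Rmult_lt_reg_r with (b - a + 1); [lra|];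
      unfold Rdiv; rewrite Rmult_assoc, Rinv_l by lra; lra).
    assert (0 <= (b - a) / (b - a + 1)) by (apply Rdiv_le_0_compat; lra).
    nra.
Qed.

Lemma ex_RInt_nondecreasing (f : R -> R) (a b : R) :
  a <= b -> nondecreasing_on f a b -> ex_RInt f a b.
Proof. intros Hab Hf. apply ex_RInt_Reals_1, Riemann_integrable_nondecreasing; auto. Qed.

(* The value at the right end point is irrelevant, so monotonicity on [[a, b)] suffices. *)
Lemma ex_RInt_nondecreasing_bounded (f : R -> R) (a b M : R) : a <= b ->
  (forall x y, a <= x -> x <= y -> y < b -> f x <= f y) ->
  (forall x, a <= x < b -> f x <= M) -> ex_RInt f a b.
Proof.
  intros Hab Hf HM.
  apply (ex_RInt_ext (fun x => if Rlt_dec x b then f x else M)).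
  - intros x Hx. rewrite Rmin_left, Rmax_right in Hx by lra.
    destruct (Rlt_dec x b); [reflexivity | lra].
  - apply ex_RInt_nondecreasing; [exact Hab|]. intros x y Hx Hxy Hy.
    destruct (Rlt_dec y b), (Rlt_dec x b); try lra; [apply Hf | apply HM]; lra.
Qed.

Lemma is_lim_p_infty_abs (f : R -> R) (l : R) :
  is_lim f p_infty l <->
  forall eps, 0 < eps -> Rbar_locally p_infty (fun x => Rabs (f x - l) < eps).
Proof.
  rewrite <- is_lim_spec. split.
  - intros H eps He. exact (H (mkposreal eps He)).
  - intros H eps. apply H, cond_pos.
Qed.

Lemma p_infty_gt (c : R) : Rbar_locally p_infty (fun x => c < x).
Proof. exists c. auto. Qed.

(* Coquelicot's lemmas restated with [Rplus] and [Rmult], so that they rewrite in goals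
   handled by [lra]. *)
Lemma RInt_Chasles_R (f : R -> R) a b c : ex_RInt f a b -> ex_RInt f b c ->
  RInt f a b + RInt f b c = RInt f a c.
Proof. apply (RInt_Chasles f a b c). Qed.

Lemma RInt_scal_R (f : R -> R) a b l : ex_RInt f a b ->
  RInt (fun x => l * f x) a b = l * RInt f a b.
Proof. apply (RInt_scal f a b l). Qed.

Lemma RInt_minus_R (f g : R -> R) a b : ex_RInt f a b -> ex_RInt g a b ->
  RInt (fun x => f x - g x) a b = RInt f a b - RInt g a b.
Proof. apply (RInt_minus f g a b). Qed.

Lemma RInt_const_R (c a b : R) : RInt (fun _ => c) a b = (b - a) * c.
Proof. rewrite RInt_const. reflexivity. Qed.

Lemma ex_RInt_sub (f : R -> R) a b c d :
  a <= c -> c <= d -> d <= b -> ex_RInt f a b -> ex_RInt f c d.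
Proof.
  intros Hac Hcd Hdb H. apply (ex_RInt_Chasles_2 (V := R_CompleteNormedModule) f a c d); [lra|].
  apply (ex_RInt_Chasles_1 (V := R_CompleteNormedModule) f a d b); [lra | exact H].
Qed.

Lemma RInt_nondecreasing_bounds (f : R -> R) a b : a <= b -> nondecreasing_on f a b ->
  (b - a) * f a <= RInt f a b <= (b - a) * f b.
Proof.
  intros Hab Hf. assert (Hi := ex_RInt_nondecreasing f a b Hab Hf).
  rewrite <- !RInt_const_R. split; apply RInt_le; auto; try apply ex_RInt_const;
    intros x Hx; apply Hf; lra.
Qed.

Lemma abs_RInt_le_const_interior (f : R -> R) a b M : a <= b -> ex_RInt f a b ->
  (forall x, a < x < b -> Rabs (f x) <= M) -> Rabs (RInt f a b) <= (b - a) * M.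
Proof.
  intros Hab Hf HM. rewrite <- RInt_const_R.
  eapply Rle_trans; [apply abs_RInt_le; auto|].
  apply RInt_le; auto; [apply (ex_RInt_norm f) | apply ex_RInt_const]; auto.
Qed.

Section ContinuityPoints.

Variable alpha : R -> R.
Hypothesis alpha_mono : forall s t, 0 <= s -> s <= t -> t < 1 -> alpha s <= alpha t.

Definition quarter_step (p : R * R) : R * R :=
  let (a, b) := p in let h := (b - a) / 4 in
  if Rle_dec (alpha (a + 2 * h) - alpha (a + h)) (alpha (a + 3 * h) - alpha (a + 2 * h))
  then (a + h, a + 2 * h) else (a + 2 * h, a + 3 * h).

Fixpoint quarter_nest (u w : R) (n : nat) : R * R :=
  match n with O => (u, w) | S n => quarter_step (quarter_nest u w n) end.

Lemma quarter_step_spec (a b : R) : 0 <= a -> a < b -> b < 1 ->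
  let p := quarter_step (a, b) in
  a < fst p /\ fst p < snd p /\ snd p < b /\
  alpha (snd p) - alpha (fst p) <= (alpha b - alpha a) / 2.
Proof.
  intros Ha Hab Hb. unfold quarter_step. set (h := (b - a) / 4). assert (0 < h) by (unfold h; lra).
  assert (alpha a <= alpha (a + h)) by (apply alpha_mono; unfold h; lra).
  assert (alpha (a + h) <= alpha (a + 2 * h)) by (apply alpha_mono; unfold h; lra).
  assert (alpha (a + 2 * h) <= alpha (a + 3 * h)) by (apply alpha_mono; unfold h; lra).
  assert (alpha (a + 3 * h) <= alpha b) by (apply alpha_mono; unfold h; lra).
  destruct Rle_dec; simpl; unfold h in *; lra.
Qed.

Lemma quarter_nest_spec (u w : R) : 0 <= u -> u < w -> w < 1 -> forall n,
  let p := quarter_nest u w n in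
  u <= fst p /\ fst p < snd p /\ snd p <= w /\
  alpha (snd p) - alpha (fst p) <= (alpha w - alpha u) * (/ 2) ^ n.
Proof.
  intros Hu Huw Hw n. induction n as [|n IH]; simpl; [lra|].
  destruct (quarter_nest u w n) as [a b]. simpl in IH.
  pose proof (quarter_step_spec a b ltac:(lra) ltac:(lra) ltac:(lra)). simpl in *. lra.
Qed.

Lemma cont_on_01_between (u w : R) : 0 <= u -> u < w -> w < 1 ->
  exists s, u < s < w /\ cont_on_01 alpha s.
Proof.
  intros Hu Huw Hw. pose proof (quarter_nest_spec u w Hu Huw Hw) as P.
  set (lo n := fst (quarter_nest u w n)). set (hi n := snd (quarter_nest u w n)).
  assert (Step : forall n, lo n < lo (S n) /\ lo (S n) < hi (S n) /\ hi (S n) < hi n).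
  { intros n. specialize (P n). unfold lo, hi. simpl in P |- *.
    destruct (quarter_nest u w n) as [a b]. simpl in P.
    pose proof (quarter_step_spec a b ltac:(lra) ltac:(lra) ltac:(lra)). simpl in *. lra. }
  assert (Hlo : forall n k, lo n <= lo (n + k)%nat).
  { intros n k. induction k; [rewrite Nat.add_0_r; lra|].
    rewrite Nat.add_succ_r. pose proof (Step (n + k)%nat). lra. }
  assert (Hhi : forall n k, hi (n + k)%nat <= hi n).
  { intros n k. induction k; [rewrite Nat.add_0_r; lra|].
    rewrite Nat.add_succ_r. pose proof (Step (n + k)%nat). lra. }
  assert (Hnest : forall n m, lo n <= hi m).
  { intros n m. destruct (Nat.le_ge_cases n m) as [Hnm|Hnm].
    - replace m with (n + (m - n))%nat by lia.
      pose proof (Hlo n (m - n)%nat). pose proof (Step (n + (m - n))%nat). lra.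
    - replace n with (m + (n - m))%nat by lia.
      pose proof (Hhi m (n - m)%nat). pose proof (Step (m + (n - m))%nat). lra. }
  destruct (completeness (fun x => exists n, x = lo n)) as [s [Hs_ub Hs_lub]].
  { exists (hi O). intros x [n ->]. apply Hnest. }
  { exists (lo O), O. reflexivity. }
  assert (Hlos : forall n, lo n < s).
  { intros n. pose proof (Step n). assert (lo (S n) <= s) by (apply Hs_ub; eexists; reflexivity). lra. }
  assert (Hshi : forall n, s < hi n).
  { intros n. pose proof (Step n).
    assert (s <= hi (S n)) by (apply Hs_lub; intros x [m ->]; apply Hnest).
    lra. }
  exists s. split; [pose proof (Hlos O); pose proof (Hshi O); unfold lo, hi in *; simpl in *; lra|].
  intros eps Heps.
  assert (HV : alpha u <= alpha w) by (apply alpha_mono; lra).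
  destruct (pow_lt_1_zero (/ 2) ltac:(rewrite Rabs_right; lra) (eps / (alpha w - alpha u + 1)))
    as [N HN]; [apply Rdiv_lt_0_compat; lra|].
  specialize (HN N (le_n N)). rewrite Rabs_right in HN by (apply Rle_ge, pow_le; lra).
  assert (Hosc : alpha (hi N) - alpha (lo N) < eps).
  { specialize (P N). unfold lo, hi. simpl in P.
    assert (0 <= (/ 2) ^ N) by (apply pow_le; lra).
    assert ((alpha w - alpha u + 1) * (/ 2) ^ N < eps).
    { apply Rmult_lt_reg_r with (/ (alpha w - alpha u + 1)); [apply Rinv_0_lt_compat; lra|].
      replace ((alpha w - alpha u + 1) * (/ 2) ^ N * / (alpha w - alpha u + 1)) with ((/ 2) ^ N)
        by (field; lra). exact HN. }
    nra. }
  pose proof (Hlos N). pose proof (Hshi N).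
  assert (u <= lo N /\ hi N <= w) by (specialize (P N); unfold lo, hi; simpl in P; lra).
  exists (Rmin (s - lo N) (hi N - s)). split; [apply Rmin_pos; lra|].
  intros t Ht Hts. pose proof (Rmin_l (s - lo N) (hi N - s)). pose proof (Rmin_r (s - lo N) (hi N - s)).
  apply Rabs_lt_between in Hts.
  assert (alpha (lo N) <= alpha t /\ alpha t <= alpha (hi N)) by (split; apply alpha_mono; lra).
  assert (alpha (lo N) <= alpha s /\ alpha s <= alpha (hi N)) by (split; apply alpha_mono; lra).
  apply Rabs_lt_between. lra.
Qed.

End ContinuityPoints.

Section VagueIntegrals.

Variable f : R -> R -> R.
Variable alpha : R -> R.
Hypothesis f_mono : forall b, 0 < b -> nondecreasing_on (f b) 0 1.
Hypothesis f_nonneg : forall b, 0 < b -> forall s, 0 <= s <= 1 -> 0 <= f b s.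
Hypothesis alpha_mono : forall s t, 0 <= s -> s <= t -> t < 1 -> alpha s <= alpha t.
Hypothesis f_cvg : forall s, 0 <= s < 1 -> cont_on_01 alpha s ->
  is_lim (fun b => f b s) p_infty (alpha s).

Lemma f_eventually_near s : 0 <= s < 1 -> cont_on_01 alpha s -> forall eps, 0 < eps ->
  Rbar_locally p_infty (fun b => 0 < b /\ Rabs (f b s - alpha s) < eps).
Proof.
  intros Hs Hc eps He. apply filter_and; [apply p_infty_gt|].
  exact (proj1 (is_lim_p_infty_abs _ _) (f_cvg s Hs Hc) eps He).
Qed.

Lemma alpha_nondecreasing_on a b : 0 <= a -> b < 1 -> nondecreasing_on alpha a b.
Proof. intros Ha Hb x y Hx Hxy Hy. apply alpha_mono; lra. Qed.

Lemma f_RInt_bounds b x y : 0 < b -> 0 <= x -> x <= y -> y <= 1 ->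
  (y - x) * f b x <= RInt (f b) x y <= (y - x) * f b y.
Proof.
  intros. apply RInt_nondecreasing_bounds; [lra|].
  apply (nondecreasing_on_sub _ 0 1); auto.
Qed.

Lemma alpha_RInt_bounds x y : 0 <= x -> x <= y -> y < 1 ->
  (y - x) * alpha x <= RInt alpha x y <= (y - x) * alpha y.
Proof. intros. apply RInt_nondecreasing_bounds, alpha_nondecreasing_on; lra. Qed.

Lemma ex_RInt_f b x y : 0 < b -> 0 <= x -> x <= y -> y <= 1 -> ex_RInt (f b) x y.
Proof. intros. apply ex_RInt_nondecreasing; [lra|]. apply (nondecreasing_on_sub _ 0 1); auto. Qed.

Lemma ex_RInt_alpha x y : 0 <= x -> x <= y -> y < 1 -> ex_RInt alpha x y.
Proof. intros. apply ex_RInt_nondecreasing, alpha_nondecreasing_on; lra. Qed.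

(* Between two continuity points [a < b] the error is controlled by the oscillation
   [(b - a) (alpha b - alpha a)]; splitting at a continuity point in the middle half
   shrinks that quantity by a factor [3/4]. *)
Lemma RInt_f_cvg_cont_points_iter n : forall a b, 0 <= a -> a < b -> b < 1 ->
  cont_on_01 alpha a -> cont_on_01 alpha b -> forall eps, 0 < eps ->
  Rbar_locally p_infty (fun be => Rabs (RInt (f be) a b - RInt alpha a b)
    <= (3 / 4) ^ n * ((b - a) * (alpha b - alpha a)) + eps).
Proof.
  induction n as [|n IH]; intros a b Ha Hab Hb Ca Cb eps He.
  - set (eta := eps / (b - a)).
    assert (Heta : 0 < eta) by (apply Rdiv_lt_0_compat; lra).
    generalize (filter_and (F := Rbar_locally p_infty) _ _ (f_eventually_near a ltac:(lra) Ca eta Heta)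
                               (f_eventually_near b ltac:(lra) Cb eta Heta)).
    apply filter_imp. intros be [[Hbe H1] [_ H2]].
    destruct (f_RInt_bounds be a b Hbe Ha ltac:(lra) ltac:(lra)).
    destruct (alpha_RInt_bounds a b Ha ltac:(lra) ltac:(lra)).
    apply Rabs_lt_between in H1. apply Rabs_lt_between in H2.
    assert (eps = (b - a) * eta) by (unfold eta; field; lra).
    assert ((b - a) * f be b <= (b - a) * (alpha b + eta)) by (apply Rmult_le_compat_l; lra).
    assert ((b - a) * (alpha a - eta) <= (b - a) * f be a) by (apply Rmult_le_compat_l; lra).
    simpl. apply Rabs_le. split; lra.
  - destruct (cont_on_01_between alpha alpha_mono (a + (b - a) / 4) (a + 3 * (b - a) / 4))
      as [m [Hm Cm]]; try lra.
    generalize (filter_and (F := Rbar_locally p_infty) _ _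
                (IH a m Ha ltac:(lra) ltac:(lra) Ca Cm (eps / 2) ltac:(lra))
              (filter_and (F := Rbar_locally p_infty) _ _
                (IH m b ltac:(lra) ltac:(lra) Hb Cm Cb (eps / 2) ltac:(lra))
                              (p_infty_gt 0))).
    apply filter_imp. intros be [H1 [H2 Hbe]].
    rewrite <- (RInt_Chasles_R (f be) a m b) by (apply ex_RInt_f; lra).
    rewrite <- (RInt_Chasles_R alpha a m b) by (apply ex_RInt_alpha; lra).
    assert (alpha a <= alpha m /\ alpha m <= alpha b) by (split; apply alpha_mono; lra).
    assert (0 <= (3 / 4) ^ n) by (apply pow_le; lra).
    assert ((m - a) * (alpha m - alpha a) <= 3 / 4 * (b - a) * (alpha m - alpha a))
      by (apply Rmult_le_compat_r; lra).
    assert ((b - m) * (alpha b - alpha m) <= 3 / 4 * (b - a) * (alpha b - alpha m))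
      by (apply Rmult_le_compat_r; lra).
    eapply Rle_trans.
    { replace (RInt (f be) a m + RInt (f be) m b - (RInt alpha a m + RInt alpha m b))
        with ((RInt (f be) a m - RInt alpha a m) + (RInt (f be) m b - RInt alpha m b)) by ring.
      apply Rabs_triang. }
    assert ((3 / 4) ^ n * ((m - a) * (alpha m - alpha a) + (b - m) * (alpha b - alpha m))
            <= (3 / 4) ^ n * (3 / 4 * ((b - a) * (alpha b - alpha a))))
      by (apply Rmult_le_compat_l; lra).
    simpl. lra.
Qed.

Lemma RInt_f_cvg_cont_points a b : 0 <= a -> a < b -> b < 1 ->
  cont_on_01 alpha a -> cont_on_01 alpha b ->
  is_lim (fun be => RInt (f be) a b) p_infty (RInt alpha a b).
Proof.
  intros Ha Hab Hb Ca Cb. apply is_lim_p_infty_abs. intros eps He.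
  set (V := (b - a) * (alpha b - alpha a)).
  assert (HV : 0 <= V) by (assert (alpha a <= alpha b) by (apply alpha_mono; lra); unfold V; nra).
  destruct (pow_lt_1_zero (3 / 4) ltac:(rewrite Rabs_right; lra) (eps / 2 / (V + 1)))
    as [N HN]; [apply Rdiv_lt_0_compat; lra|].
  specialize (HN N (le_n N)). rewrite Rabs_right in HN by (apply Rle_ge, pow_le; lra).
  assert (Hsmall : (3 / 4) ^ N * V < eps / 2).
  { assert (0 <= (3 / 4) ^ N) by (apply pow_le; lra).
    apply Rle_lt_trans with ((3 / 4) ^ N * (V + 1)); [nra|].
    apply Rmult_lt_reg_r with (/ (V + 1)); [apply Rinv_0_lt_compat; lra|].
    replace ((3 / 4) ^ N * (V + 1) * / (V + 1)) with ((3 / 4) ^ N) by (field; lra). exact HN. }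
  generalize (RInt_f_cvg_cont_points_iter N a b Ha Hab Hb Ca Cb (eps / 2) ltac:(lra)).
  apply filter_imp. fold V. intros be Hbe. lra.
Qed.

(* The end points [0] and [q] need not be continuity points: move them to nearby
   continuity points [a] and [b], paying [O(eta)] since both [f be] and [alpha] stay
   bounded near them. *)
Lemma RInt_f_cvg q : 0 <= q < 1 -> is_lim (fun be => RInt (f be) 0 q) p_infty (RInt alpha 0 q).
Proof.
  intros Hq. destruct (Req_dec q 0) as [->|Hq0].
  { apply (is_lim_ext (fun _ => 0)); [intros; rewrite RInt_point; reflexivity|].
    rewrite RInt_point. apply is_lim_const. }
  apply is_lim_p_infty_abs. intros eps He.
  set (r := (q + 1) / 2).
  set (K := Rabs (alpha 0) + Rabs (alpha r) + 1).
  assert (HaK : forall s, 0 <= s <= r -> - K <= alpha s <= K).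
  { intros s Hs.
    assert (alpha 0 <= alpha s /\ alpha s <= alpha r) by (split; apply alpha_mono; unfold r in *; lra).
    pose proof (proj1 (Rabs_le_between (alpha 0) _) (Rle_refl _)).
    pose proof (proj1 (Rabs_le_between (alpha r) _) (Rle_refl _)). unfold K. lra. }
  assert (HK : 1 <= K)
    by (unfold K; pose proof (Rabs_pos (alpha 0)); pose proof (Rabs_pos (alpha r)); lra).
  set (eta := Rmin (q / 2) (Rmin ((1 - q) / 2) (eps / (8 * (K + 1))))).
  assert (Heta1 : eta <= q / 2) by apply Rmin_l.
  assert (Heta2 : eta <= (1 - q) / 2) by (eapply Rle_trans; [apply Rmin_r | apply Rmin_l]).
  assert (Heta : 0 < eta)
    by (apply Rmin_pos; [lra | apply Rmin_pos; [lra|]]; apply Rdiv_lt_0_compat; lra).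
  assert (Heta3 : eta * (K + 1) <= eps / 8).
  { assert (eta <= eps / (8 * (K + 1))) by (eapply Rle_trans; [apply Rmin_r | apply Rmin_r]).
    apply Rmult_le_reg_r with (/ (K + 1)); [apply Rinv_0_lt_compat; lra|].
    replace (eta * (K + 1) * / (K + 1)) with eta by (field; lra).
    replace (eps / 8 * / (K + 1)) with (eps / (8 * (K + 1))) by (field; lra). assumption. }
  destruct (cont_on_01_between alpha alpha_mono 0 eta) as [a [Ha Ca]]; try lra.
  destruct (cont_on_01_between alpha alpha_mono q (q + eta)) as [b [Hb Cb]]; try lra.
  generalize (filter_and (F := Rbar_locally p_infty) _ _
    (proj1 (is_lim_p_infty_abs _ _) (RInt_f_cvg_cont_points a b ltac:(lra) ltac:(lra) ltac:(lra) Ca Cb)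
       (eps / 4) ltac:(lra))
    (filter_and (F := Rbar_locally p_infty) _ _ (f_eventually_near a ltac:(lra) Ca 1 ltac:(lra))
                    (f_eventually_near b ltac:(lra) Cb 1 ltac:(lra)))).
  apply filter_imp. intros be [H1 [[Hbe H2] [_ H3]]].
  assert (E1 : @eq R (RInt (f be) 0 q) (RInt (f be) 0 a + RInt (f be) a b - RInt (f be) q b)).
  { rewrite <- (RInt_Chasles_R (f be) a q b), <- (RInt_Chasles_R (f be) 0 a q)
      by (apply ex_RInt_f; lra). ring. }
  assert (E2 : @eq R (RInt alpha 0 q) (RInt alpha 0 a + RInt alpha a b - RInt alpha q b)).
  { rewrite <- (RInt_Chasles_R alpha a q b), <- (RInt_Chasles_R alpha 0 a q)
      by (apply ex_RInt_alpha; lra). ring. }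
  rewrite E1, E2.
  destruct (f_RInt_bounds be 0 a Hbe ltac:(lra) ltac:(lra) ltac:(lra)).
  destruct (f_RInt_bounds be q b Hbe ltac:(lra) ltac:(lra) ltac:(lra)).
  destruct (alpha_RInt_bounds 0 a ltac:(lra) ltac:(lra) ltac:(lra)).
  destruct (alpha_RInt_bounds q b ltac:(lra) ltac:(lra) ltac:(lra)).
  pose proof (f_nonneg be Hbe 0 ltac:(lra)). pose proof (f_nonneg be Hbe q ltac:(lra)).
  apply Rabs_lt_between in H1. apply Rabs_lt_between in H2. apply Rabs_lt_between in H3.
  pose proof (HaK 0 ltac:(unfold r; lra)). pose proof (HaK a ltac:(unfold r; lra)).
  pose proof (HaK q ltac:(unfold r; lra)). pose proof (HaK b ltac:(unfold r; lra)).
  assert (f be a <= K + 1 /\ f be b <= K + 1) by lra.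
  assert (0 <= f be a /\ 0 <= f be b) by (split; apply f_nonneg; lra).
  assert (RInt (f be) 0 a <= eta * (K + 1)) by nra.
  assert (RInt (f be) q b <= eta * (K + 1)) by nra.
  assert (- (eta * (K + 1)) <= RInt alpha 0 a <= eta * (K + 1)) by (split; nra).
  assert (- (eta * (K + 1)) <= RInt alpha q b <= eta * (K + 1)) by (split; nra).
  assert (0 <= (a - 0) * f be 0 /\ 0 <= (b - q) * f be q) by (split; apply Rmult_le_pos; lra).
  apply Rabs_lt_between. lra.
Qed.

End VagueIntegrals.

Lemma filter_forall_le_nat {T : Type} {F : (T -> Prop) -> Prop} {FF : Filter F}
  (P : nat -> T -> Prop) (n : nat) :
  (forall k, (k <= n)%nat -> F (P k)) -> F (fun x => forall k, (k <= n)%nat -> P k x).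
Proof.
  induction n as [|n IH]; intros HP.
  - apply (filter_imp (P 0%nat)); [|apply HP; lia].
    intros x Hx k Hk. replace k with 0%nat by lia. exact Hx.
  - apply (filter_imp (fun x => (forall k, (k <= n)%nat -> P k x) /\ P (S n) x)).
    + intros x [Hx Hn] k Hk. destruct (Nat.eq_dec k (S n)) as [->|Hne]; [exact Hn|].
      apply Hx. lia.
    + apply filter_and; [apply IH; intros k Hk; apply HP; lia | apply HP; lia].
Qed.

Lemma grid_cover (h : R) (n : nat) : 0 < h -> forall q, 0 <= q <= INR (S n) * h ->
  exists k, (k <= n)%nat /\ INR k * h <= q <= INR (S k) * h.
Proof.
  intros Hh. induction n as [|n IH]; intros q Hq.
  - exists 0%nat. rewrite INR_0, INR_1 in *. split; [lia | lra].
  - destruct (Rle_lt_dec q (INR (S n) * h)) as [Hle|Hlt].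
    + destruct (IH q ltac:(lra)) as [k [Hk Hkq]]. exists k. split; [lia | exact Hkq].
    + exists (S n). split; [lia | lra].
Qed.

(* Dini's second theorem, via monotone interpolation between the points of a grid. *)
Lemma unif_cvg_nondecreasing (F : R -> R -> R) (G : R -> R) (c K : R) : 0 <= c -> 0 <= K ->
  (forall b, 0 < b -> nondecreasing_on (F b) 0 c) ->
  (forall x y, 0 <= x -> x <= y -> y <= c -> Rabs (G y - G x) <= K * (y - x)) ->
  (forall q, 0 <= q <= c -> is_lim (fun b => F b q) p_infty (G q)) ->
  forall eps, 0 < eps ->
  Rbar_locally p_infty (fun b => forall q, 0 <= q <= c -> Rabs (F b q - G q) < eps).
Proof.
  intros Hc HK HF HG Hcvg eps He.
  destruct (archimed_cor1 (eps / (2 * (K * c + 1)))) as [[|n] [Hn Hn0]]; [|lia|].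
  { apply Rdiv_lt_0_compat; [lra|]. assert (0 <= K * c) by (apply Rmult_le_pos; lra). lra. }
  assert (HnR : 0 < INR (S n)) by (apply lt_0_INR; lia).
  destruct (Req_dec c 0) as [Hc0|Hc0].
  { generalize (proj1 (is_lim_p_infty_abs _ _) (Hcvg 0 ltac:(lra)) eps He).
    apply filter_imp. intros b Hb q Hq. replace q with 0 by lra. exact Hb. }
  set (h := c / INR (S n)).
  assert (Hh : 0 < h) by (apply Rdiv_lt_0_compat; lra).
  assert (Hnh : INR (S n) * h = c) by (unfold h; field; lra).
  assert (HKh : K * h < eps / 2).
  { assert (K * h <= (K * c + 1) * / INR (S n)).
    { unfold h, Rdiv. rewrite <- Rmult_assoc.
      apply Rmult_le_compat_r; [left; apply Rinv_0_lt_compat|]; lra. }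
    assert ((K * c + 1) * / INR (S n) < eps / 2); [|lra].
    apply Rmult_lt_reg_l with (/ (K * c + 1)).
    { apply Rinv_0_lt_compat. assert (0 <= K * c) by (apply Rmult_le_pos; lra). lra. }
    replace (eps / 2) with ((K * c + 1) * (eps / (2 * (K * c + 1))))
      by (field; assert (0 <= K * c) by (apply Rmult_le_pos; lra); lra).
    rewrite <- !Rmult_assoc, Rinv_l, !Rmult_1_l
      by (assert (0 <= K * c) by (apply Rmult_le_pos; lra); lra).
    exact Hn. }
  assert (Hgrid : forall k, (k <= S n)%nat -> 0 <= INR k * h <= c).
  { intros k Hk. rewrite <- Hnh. pose proof (pos_INR k).
    split; [nra | apply Rmult_le_compat_r; [lra | apply le_INR; exact Hk]]. }
  generalize (filter_and (F := Rbar_locally p_infty) _ _ (p_infty_gt 0)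
    (filter_forall_le_nat (F := Rbar_locally p_infty)
       (fun k b => Rabs (F b (INR k * h) - G (INR k * h)) < eps / 2) (S n)
       (fun k Hk => proj1 (is_lim_p_infty_abs _ _) (Hcvg _ (Hgrid k Hk)) (eps / 2) ltac:(lra)))).
  apply filter_imp. intros b [Hb Hnear] q Hq.
  destruct (grid_cover h n Hh q ltac:(lra)) as [k [Hk [Hkq Hqk]]].
  pose proof (Hgrid k ltac:(lia)) as Hk1. pose proof (Hgrid (S k) ltac:(lia)) as Hk2.
  rewrite S_INR in Hqk, Hk2.
  assert (Hlo := Hnear k ltac:(lia)). assert (Hhi := Hnear (S k) ltac:(lia)). rewrite S_INR in Hhi.
  assert (F b (INR k * h) <= F b q /\ F b q <= F b ((INR k + 1) * h)) by (split; apply HF; lra).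
  assert (L1 := HG (INR k * h) q ltac:(lra) ltac:(lra) ltac:(lra)).
  assert (L2 := HG q ((INR k + 1) * h) ltac:(lra) ltac:(lra) ltac:(lra)).
  assert (K * (q - INR k * h) <= K * h /\ K * ((INR k + 1) * h - q) <= K * h)
    by (split; apply Rmult_le_compat_l; lra).
  apply Rabs_lt_between in Hlo, Hhi. apply Rabs_le_between in L1, L2.
  apply Rabs_lt_between. lra.
Qed.

(* Split at [c] close to [1]; the uniform bound makes the stretch [[c, 1]] negligible. *)
Lemma is_lim_RInt_unif_on_compacts (G : R -> R -> R) (g : R -> R) (u : R -> R) (B : R) :
  (forall c, c < 1 -> Rbar_locally p_infty (fun b => c <= u b <= 1)) ->
  Rbar_locally p_infty (fun b => ex_RInt (G b) 0 (u b) /\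
                                 forall q, 0 <= q <= u b -> Rabs (G b q) <= B) ->
  ex_RInt g 0 1 -> (forall q, 0 <= q < 1 -> Rabs (g q) <= B) ->
  (forall c, 0 <= c < 1 -> forall eps, 0 < eps ->
     Rbar_locally p_infty (fun b => forall q, 0 <= q <= c -> Rabs (G b q - g q) < eps)) ->
  is_lim (fun b => RInt (G b) 0 (u b)) p_infty (RInt g 0 1).
Proof.
  intros Hu HG Hg HgB Hunif. apply is_lim_p_infty_abs. intros eps He.
  assert (HB : 0 <= B) by (pose proof (HgB 0 ltac:(lra)); pose proof (Rabs_pos (g 0)); lra).
  set (eta := Rmin (1 / 2) (eps / (4 * (B + 1)))).
  assert (Heta : 0 < eta) by (apply Rmin_pos; [lra | apply Rdiv_lt_0_compat; lra]).
  assert (Heta1 : eta <= 1 / 2) by apply Rmin_l.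
  assert (HetaB : eta * B < eps / 4).
  { apply Rle_lt_trans with (eps / (4 * (B + 1)) * B); [apply Rmult_le_compat_r; [lra | apply Rmin_r]|].
    apply Rmult_lt_reg_r with (4 * (B + 1)); [lra|].
    replace (eps / (4 * (B + 1)) * B * (4 * (B + 1))) with (eps * B) by (field; lra). nra. }
  set (c := 1 - eta).
  generalize (filter_and (F := Rbar_locally p_infty) _ _ (Hu c ltac:(unfold c; lra))
    (filter_and (F := Rbar_locally p_infty) _ _ HG (Hunif c ltac:(unfold c; lra) (eps / 4) ltac:(lra)))).
  apply filter_imp. intros b [Hub [[HGi HGB] Hclose]].
  assert (EG0 : ex_RInt (G b) 0 c) by (apply (ex_RInt_sub _ 0 (u b)); auto; unfold c in *; lra).
  assert (EG1 : ex_RInt (G b) c (u b)) by (apply (ex_RInt_sub _ 0 (u b)); auto; unfold c in *; lra).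
  assert (Eg0 : ex_RInt g 0 c) by (apply (ex_RInt_sub _ 0 1); auto; unfold c; lra).
  assert (Eg1 : ex_RInt g c 1) by (apply (ex_RInt_sub _ 0 1); auto; unfold c; lra).
  rewrite <- (RInt_Chasles_R (G b) 0 c (u b)), <- (RInt_Chasles_R g 0 c 1) by assumption.
  assert (A1 : Rabs (RInt (G b) 0 c - RInt g 0 c) <= (c - 0) * (eps / 4)).
  { rewrite <- (RInt_minus_R (G b) g 0 c) by assumption.
    apply abs_RInt_le_const; [unfold c; lra | |].
    - exact (ex_RInt_minus (V := R_CompleteNormedModule) _ _ 0 c EG0 Eg0).
    - intros t Ht. left. apply Hclose. lra. }
  assert (A2 : Rabs (RInt (G b) c (u b)) <= (u b - c) * B).
  { apply abs_RInt_le_const; [lra | exact EG1|]. intros t Ht. apply HGB. unfold c in *; lra. }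
  assert (A3 : Rabs (RInt g c 1) <= (1 - c) * B).
  { apply abs_RInt_le_const_interior; [unfold c; lra | exact Eg1|].
    intros t Ht. apply HgB. unfold c in *; lra. }
  assert ((u b - c) * B <= eta * B) by (apply Rmult_le_compat_r; unfold c in *; lra).
  replace (1 - c) with eta in A3 by (unfold c; ring).
  assert ((c - 0) * (eps / 4) <= eps / 4) by (unfold c; nra).
  apply Rabs_le_between in A1, A2, A3. apply Rabs_lt_between. lra.
Qed.

Lemma const_of_quadratic_increments (H : R -> R) (C a b : R) : a <= b ->
  (forall x y, a <= x -> x <= y -> y <= b -> Rabs (H y - H x) <= C * (y - x) ^ 2) ->
  H b = H a.
Proof.
  intros Hab HH.
  assert (Hn : forall n : nat, Rabs (H b - H a) <= C * (b - a) ^ 2 * / INR (S n)).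
  { intros n. assert (HnR : 0 < INR (S n)) by (apply lt_0_INR; lia).
    set (h := (b - a) / INR (S n)).
    assert (Hh : 0 <= h) by (apply Rdiv_le_0_compat; lra).
    assert (Hnh : INR (S n) * h = b - a) by (unfold h; field; lra).
    assert (Htele : forall k, (k <= S n)%nat -> Rabs (H (a + INR k * h) - H a) <= INR k * (C * h ^ 2)).
    { induction k as [|k IH]; intros Hk.
      - rewrite INR_0, Rmult_0_l, Rplus_0_r, Rminus_diag, Rabs_R0. lra.
      - assert (Hk1 : INR (S k) * h <= b - a)
          by (rewrite <- Hnh; apply Rmult_le_compat_r; [exact Hh | apply le_INR; exact Hk]).
        rewrite S_INR in *. pose proof (pos_INR k).
        assert (Hstep := HH (a + INR k * h) (a + (INR k + 1) * h) ltac:(nra) ltac:(nra) ltac:(lra)).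
        replace (a + (INR k + 1) * h - (a + INR k * h)) with h in Hstep by ring.
        specialize (IH ltac:(lia)).
        replace (H (a + (INR k + 1) * h) - H a) with
          ((H (a + (INR k + 1) * h) - H (a + INR k * h)) + (H (a + INR k * h) - H a)) by ring.
        eapply Rle_trans; [apply Rabs_triang | lra]. }
    specialize (Htele (S n) (le_n _)). rewrite Hnh in Htele.
    replace (a + (b - a)) with b in Htele by ring.
    replace (C * (b - a) ^ 2 * / INR (S n)) with (INR (S n) * (C * h ^ 2)) by (unfold h; field; lra).
    exact Htele. }
  destruct (Req_dec (H b - H a) 0) as [E|E]; [lra|]. exfalso.
  assert (HD : 0 < Rabs (H b - H a)) by (apply Rabs_pos_lt; exact E).
  set (D := C * (b - a) ^ 2).
  assert (HD0 : 0 < D) by (eapply Rlt_le_trans; [exact HD|]; specialize (Hn O);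
    simpl INR in Hn; rewrite Rinv_1, Rmult_1_r in Hn; exact Hn).
  assert (Hq : 0 < Rabs (H b - H a) / D) by (apply Rdiv_lt_0_compat; lra).
  destruct (archimed_cor1 _ Hq) as [[|n] [HN HN0]]; [lia|].
  specialize (Hn n). fold D in Hn.
  assert (D * / INR (S n) < Rabs (H b - H a)); [|lra].
  apply Rmult_lt_reg_r with (/ D); [apply Rinv_0_lt_compat; lra|].
  replace (D * / INR (S n) * / D) with (/ INR (S n)) by (field; split; [lra | apply not_0_INR; lia]).
  exact HN.
Qed.

Section IntegrationByParts.

Variables w w' f : R -> R.
Variables a b M K : R.
Hypothesis Hab : a <= b.
Hypothesis w_deriv : forall x, a <= x <= b -> is_derive w x (w' x).
Hypothesis w'_cont : forall x, a <= x <= b -> continuous w' x.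
Hypothesis w'_bound : forall x, a <= x <= b -> Rabs (w' x) <= K.
Hypothesis f_int : ex_RInt f a b.
Hypothesis f_bound : forall x, a <= x <= b -> Rabs (f x) <= M.
Hypothesis wf_int : ex_RInt (fun x => w x * f x) a b.
Hypothesis w'F_int : ex_RInt (fun x => w' x * RInt f a x) a b.

Let F x := RInt f a x.

(* Vanishes at [a]; the claim is that it also vanishes at [b]. *)
Let defect x := RInt (fun t => w t * f t) a x - w x * F x + RInt (fun t => w' t * F t) a x.

Lemma RInt_derive_sub x y : a <= x -> x <= y -> y <= b -> RInt w' x y = w y - w x.
Proof.
  intros. apply is_RInt_unique, (is_RInt_derive w w' x y);
    intros t Ht; rewrite Rmin_left, Rmax_right in Ht by lra; [apply w_deriv | apply w'_cont]; lra.
Qed.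

Lemma ex_RInt_w' x y : a <= x -> x <= y -> y <= b -> ex_RInt w' x y.
Proof.
  intros. apply (ex_RInt_continuous (V := R_CompleteNormedModule)).
  intros t Ht. apply w'_cont. rewrite Rmin_left, Rmax_right in Ht by lra. lra.
Qed.

(* [ex_RInt_ext] and [RInt_ext] state pointwise equalities in the carrier of
   [R_CompleteNormedModule], where [ring] needs the detour through [Rminus_diag_uniq]. *)
Lemma ex_RInt_w_shift_f x y : a <= x -> x <= y -> y <= b ->
  ex_RInt (fun t => (w t - w y) * f t) x y.
Proof.
  intros Hx Hxy Hy.
  apply (ex_RInt_ext (fun t => w t * f t - w y * f t)); [intros; apply Rminus_diag_uniq; ring|].
  apply (ex_RInt_minus (V := R_CompleteNormedModule)); [apply (ex_RInt_sub _ a b); auto|].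
  apply (ex_RInt_scal (V := R_CompleteNormedModule)), (ex_RInt_sub f a b); auto.
Qed.

Lemma ex_RInt_w'_shift_F x y : a <= x -> x <= y -> y <= b ->
  ex_RInt (fun t => w' t * (F t - F x)) x y.
Proof.
  intros Hx Hxy Hy.
  apply (ex_RInt_ext (fun t => w' t * F t - F x * w' t)); [intros; apply Rminus_diag_uniq; ring|].
  apply (ex_RInt_minus (V := R_CompleteNormedModule)); [apply (ex_RInt_sub _ a b); auto|].
  apply (ex_RInt_scal (V := R_CompleteNormedModule)), ex_RInt_w'; auto.
Qed.

Lemma defect_sub x y : a <= x -> x <= y -> y <= b ->
  defect y - defect x
  = RInt (fun t => (w t - w y) * f t) x y + RInt (fun t => w' t * (F t - F x)) x y.
Proof.
  intros Hx Hxy Hy.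
  assert (Ef : ex_RInt f x y) by (apply (ex_RInt_sub f a b); auto).
  assert (Ewf : ex_RInt (fun t => w t * f t) x y) by (apply (ex_RInt_sub _ a b); auto).
  assert (Ew'F : ex_RInt (fun t => w' t * F t) x y) by (apply (ex_RInt_sub _ a b); auto).
  assert (Ew' := ex_RInt_w' x y Hx Hxy Hy).
  assert (Ewyf : ex_RInt (fun t => w y * f t) x y)
    by exact (ex_RInt_scal (V := R_CompleteNormedModule) f x y (w y) Ef).
  assert (EFxw' : ex_RInt (fun t => F x * w' t) x y)
    by exact (ex_RInt_scal (V := R_CompleteNormedModule) w' x y (F x) Ew').
  rewrite (RInt_ext (fun t => (w t - w y) * f t) (fun t => w t * f t - w y * f t))
    by (intros; apply Rminus_diag_uniq; ring).
  rewrite (RInt_ext (fun t => w' t * (F t - F x)) (fun t => w' t * F t - F x * w' t))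
    by (intros; apply Rminus_diag_uniq; ring).
  rewrite (RInt_minus_R (fun t => w t * f t) (fun t => w y * f t)) by assumption.
  rewrite (RInt_minus_R (fun t => w' t * F t) (fun t => F x * w' t)) by assumption.
  rewrite (RInt_scal_R f) by exact Ef. rewrite (RInt_scal_R w') by exact Ew'.
  rewrite RInt_derive_sub by assumption.
  unfold defect, F.
  rewrite <- (RInt_Chasles_R (fun t => w t * f t) a x y)
    by (try assumption; apply (ex_RInt_sub _ a b); auto; lra).
  rewrite <- (RInt_Chasles_R (fun t => w' t * RInt f a t) a x y)
    by (try assumption; apply (ex_RInt_sub _ a b); auto; lra).
  rewrite <- (RInt_Chasles_R f a x y) by (try assumption; apply (ex_RInt_sub _ a b); auto; lra).
  ring.
Qed.

(* Both integrands in [defect_sub] are [O(y - x)] on [[x, y]]. *)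
Lemma defect_increment x y : a <= x -> x <= y -> y <= b ->
  Rabs (defect y - defect x) <= 2 * K * M * (y - x) ^ 2.
Proof.
  intros Hx Hxy Hy.
  assert (HK : 0 <= K) by (pose proof (w'_bound a ltac:(lra)); pose proof (Rabs_pos (w' a)); lra).
  assert (HM : 0 <= M) by (pose proof (f_bound a ltac:(lra)); pose proof (Rabs_pos (f a)); lra).
  assert (B1 : Rabs (RInt (fun t => (w t - w y) * f t) x y) <= (y - x) * (K * (y - x) * M)).
  { apply abs_RInt_le_const; [lra | apply ex_RInt_w_shift_f; auto|]. intros t Ht. rewrite Rabs_mult.
    apply Rmult_le_compat; try apply Rabs_pos; [|apply f_bound; lra].
    rewrite <- Rabs_Ropp. replace (- (w t - w y)) with (w y - w t) by ring.
    rewrite <- RInt_derive_sub by lra.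
    eapply Rle_trans; [apply abs_RInt_le_const; [lra | apply ex_RInt_w'; lra | ]|].
    - intros s Hs. apply w'_bound. lra.
    - rewrite Rmult_comm. apply Rmult_le_compat_l; lra. }
  assert (B2 : Rabs (RInt (fun t => w' t * (F t - F x)) x y) <= (y - x) * (K * (M * (y - x)))).
  { apply abs_RInt_le_const; [lra | apply ex_RInt_w'_shift_F; auto|]. intros t Ht. rewrite Rabs_mult.
    apply Rmult_le_compat; try apply Rabs_pos; [apply w'_bound; lra|].
    replace (F t - F x) with (RInt f x t).
    - eapply Rle_trans; [apply abs_RInt_le_const; [lra | apply (ex_RInt_sub f a b); auto; lra|]|].
      + intros s Hs. apply f_bound. lra.
      + rewrite Rmult_comm. apply Rmult_le_compat_l; lra.
    - unfold F. rewrite <- (RInt_Chasles_R f a x t) by (apply (ex_RInt_sub f a b); auto; lra).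
      apply Rminus_diag_uniq. ring. }
  replace (2 * K * M * (y - x) ^ 2)
    with ((y - x) * (K * (y - x) * M) + (y - x) * (K * (M * (y - x)))) by ring.
  rewrite defect_sub by assumption. eapply Rle_trans; [apply Rabs_triang | lra].
Qed.

Lemma RInt_by_parts :
  RInt (fun x => w x * f x) a b = w b * RInt f a b - RInt (fun x => w' x * RInt f a x) a b.
Proof.
  assert (Hb := const_of_quadratic_increments defect (2 * K * M) a b Hab defect_increment).
  unfold defect, F in Hb. rewrite !RInt_point in Hb. unfold zero in Hb; simpl in Hb. lra.
Qed.

End IntegrationByParts.

Definition xi_coef (gamma : nat -> R) (k : nat) : R := if (k <? 2)%nat then 0 else gamma k ^ 2.

Lemma xi_PSeries gamma : xi gamma = PSeries (xi_coef gamma).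
Proof.
  apply functional_extensionality. intros s. unfold xi, PSeries. apply Series_ext.
  intros n. unfold xi_term, xi_coef. destruct (n <? 2)%nat; ring.
Qed.

Lemma xi_coef_nonneg gamma n : 0 <= xi_coef gamma n.
Proof. unfold xi_coef. destruct (n <? 2)%nat; [lra | apply pow2_ge_0]. Qed.

Lemma CV_radius_xi_coef gamma :
  ex_series (fun p => if (p <? 2)%nat then 0 else 2 ^ p * (gamma p) ^ 2) ->
  Rbar_le 2 (CV_radius (xi_coef gamma)).
Proof.
  intros H. destruct (Rbar_lt_le_dec (CV_radius (xi_coef gamma)) (Rabs 2)) as [Hl|Hl].
  - exfalso. apply (CV_disk_outside _ _ Hl), ex_series_lim_0.
    apply ex_series_ext with (2 := H). intros n. apply Rminus_diag_uniq.
    unfold xi_coef. destruct (n <? 2)%nat; ring.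
  - rewrite Rabs_right in Hl by lra. exact Hl.
Qed.

Lemma Rbar_lt_of_le_2 (r : Rbar) x : Rbar_le 2 r -> Rabs x < 2 -> Rbar_lt (Rabs x) r.
Proof. intros H1 H2. eapply Rbar_lt_le_trans; [|exact H1]. exact H2. Qed.

Lemma PS_derive_nonneg (d : nat -> R) : (forall n, 0 <= d n) -> forall n, 0 <= PS_derive d n.
Proof. intros H n. unfold PS_derive. apply Rmult_le_pos; [apply pos_INR | apply H]. Qed.

Lemma PSeries_nonneg_nondecreasing (d : nat -> R) : (forall n, 0 <= d n) ->
  Rbar_le 2 (CV_radius d) ->
  (forall x, 0 <= x <= 1 -> 0 <= PSeries d x) /\ nondecreasing_on (PSeries d) 0 1.
Proof.
  intros Hd Hr.
  assert (Hex : forall x, 0 <= x <= 1 -> ex_series (fun k => d k * x ^ k)).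
  { intros x Hx. apply ex_series_ext with (a := fun k => Rabs (d k * x ^ k)).
    - intros n. rewrite Rabs_right; [reflexivity|].
      apply Rle_ge, Rmult_le_pos; [apply Hd | apply pow_le; lra].
    - apply CV_disk_inside, Rbar_lt_of_le_2; [exact Hr|]. rewrite Rabs_right; lra. }
  split.
  - intros x Hx. rewrite <- (PSeries_const_0 x). apply Series_le; [|apply Hex; lra].
    intros n. rewrite Rmult_0_l. split; [lra|]. apply Rmult_le_pos; [apply Hd | apply pow_le; lra].
  - intros x y Hx Hxy Hy. apply Series_le; [|apply Hex; lra].
    intros n. split; [apply Rmult_le_pos; [apply Hd | apply pow_le; lra]|].
    apply Rmult_le_compat_l; [apply Hd | apply pow_incr; lra].
Qed.

Section XiDerivatives.

Variable gamma : nat -> R.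
Hypothesis Hgamma : ex_series (fun p => if (p <? 2)%nat then 0 else 2 ^ p * (gamma p) ^ 2).

Let xi1 := PS_derive (xi_coef gamma).
Let xi2 := PS_derive xi1.

Lemma CV_radius_xi1 : Rbar_le 2 (CV_radius xi1).
Proof. unfold xi1. rewrite CV_radius_derive. apply CV_radius_xi_coef, Hgamma. Qed.

Lemma CV_radius_xi2 : Rbar_le 2 (CV_radius xi2).
Proof. unfold xi2. rewrite CV_radius_derive. apply CV_radius_xi1. Qed.

Lemma xi1_nonneg n : 0 <= xi1 n.
Proof. apply PS_derive_nonneg, xi_coef_nonneg. Qed.

Lemma xi2_nonneg n : 0 <= xi2 n.
Proof. apply PS_derive_nonneg, xi1_nonneg. Qed.

Lemma Derive_xi x : Rabs x < 2 -> Derive (xi gamma) x = PSeries xi1 x.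
Proof.
  intros Hx. rewrite xi_PSeries. apply Derive_PSeries, Rbar_lt_of_le_2; [|exact Hx].
  apply CV_radius_xi_coef, Hgamma.
Qed.

Lemma Derive2_xi x : Rabs x < 2 -> Derive (Derive (xi gamma)) x = PSeries xi2 x.
Proof.
  intros Hx. rewrite (Derive_ext_loc _ (PSeries xi1)).
  - apply Derive_PSeries, Rbar_lt_of_le_2; [apply CV_radius_xi1 | exact Hx].
  - assert (He : 0 < 2 - Rabs x) by lra. exists (mkposreal _ He). intros t Ht. apply Derive_xi.
    change (Rabs (t - x) < 2 - Rabs x) in Ht. pose proof (Rabs_triang_inv t x). lra.
Qed.

Lemma is_derive_xi1_shift (c x : R) : Rabs x < 2 ->
  is_derive (fun q => PSeries xi1 q + c) x (PSeries xi2 x).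
Proof.
  intros Hx. replace (PSeries xi2 x) with (PSeries xi2 x + 0) by ring.
  apply (is_derive_plus (PSeries xi1) (fun _ => c) x (PSeries xi2 x) 0).
  - apply is_derive_PSeries, Rbar_lt_of_le_2; [apply CV_radius_xi1 | exact Hx].
  - apply (is_derive_const (K := R_AbsRing) (V := R_NormedModule)).
Qed.

Lemma continuous_xi2 x : Rabs x < 2 -> continuous (PSeries xi2) x.
Proof.
  intros Hx. apply continuity_pt_filterlim, PSeries_continuity, Rbar_lt_of_le_2;
    [apply CV_radius_xi2 | exact Hx].
Qed.

Lemma xi1_nonneg_nondecreasing :
  (forall x, 0 <= x <= 1 -> 0 <= PSeries xi1 x) /\ nondecreasing_on (PSeries xi1) 0 1.
Proof. apply PSeries_nonneg_nondecreasing; [apply xi1_nonneg | apply CV_radius_xi1]. Qed.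

Lemma xi2_nonneg_nondecreasing :
  (forall x, 0 <= x <= 1 -> 0 <= PSeries xi2 x) /\ nondecreasing_on (PSeries xi2) 0 1.
Proof. apply PSeries_nonneg_nondecreasing; [apply xi2_nonneg | apply CV_radius_xi2]. Qed.

End XiDerivatives.

Lemma RInt_inv_one_minus a b : a <= b -> b < 1 ->
  RInt (fun q => / (1 - q)) a b = ln (1 - a) - ln (1 - b).
Proof.
  intros Hab Hb. apply is_RInt_unique.
  replace (ln (1 - a) - ln (1 - b)) with (minus ((fun q => - ln (1 - q)) b) ((fun q => - ln (1 - q)) a))
    by (unfold minus, plus, opp; simpl; ring).
  apply (is_RInt_derive (fun q => - ln (1 - q)) (fun q => / (1 - q)));
    intros x Hx; rewrite Rmin_left, Rmax_right in Hx by lra.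
  - auto_derive; [lra | field; lra].
  - apply (ex_derive_continuous (K := R_AbsRing) (V := R_NormedModule)). auto_derive. lra.
Qed.

Section Xhat.

Variable z : R -> R.
Hypothesis z_mono : nondecreasing_on z 0 1.
Hypothesis z_01 : forall s, 0 <= s <= 1 -> 0 <= z s <= 1.

Lemma xhat_one_minus u q : 0 <= u -> z u = 1 -> u <= q <= 1 -> xhat z q = 1 - q.
Proof.
  intros Hu Hzu Hq. unfold xhat. rewrite (RInt_ext z (fun _ => 1)).
  - rewrite RInt_const_R. ring.
  - intros x Hx. rewrite Rmin_left, Rmax_right in Hx by lra.
    assert (z u <= z x) by (apply z_mono; lra). destruct (z_01 x ltac:(lra)). lra.
Qed.

Lemma xhat_nonincreasing x y : 0 <= x -> x <= y -> y <= 1 -> xhat z y <= xhat z x.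
Proof.
  intros. unfold xhat.
  rewrite <- (RInt_Chasles_R z x y 1) by (apply ex_RInt_nondecreasing; [lra|];
    apply (nondecreasing_on_sub _ 0 1); auto; lra).
  assert (0 <= RInt z x y); [|lra].
  apply RInt_ge_0; [lra | |intros; apply z_01; lra].
  apply ex_RInt_nondecreasing; [lra|]. apply (nondecreasing_on_sub _ 0 1); auto; lra.
Qed.

Lemma ex_RInt_inv_xhat u : 0 <= u < 1 -> z u = 1 -> ex_RInt (fun q => / xhat z q) 0 u.
Proof.
  intros Hu Hzu. apply ex_RInt_nondecreasing; [lra|]. intros x y Hx Hxy Hy.
  assert (1 - u <= xhat z y).
  { rewrite <- (xhat_one_minus u u) by (auto; lra). apply xhat_nonincreasing; lra. }
  apply Rinv_le_contravar; [lra | apply xhat_nonincreasing; lra].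
Qed.

(* Past [u], [xhat z q = 1 - q], whose reciprocal integrates to the change of [ln (1 - q)]. *)
Lemma RInt_inv_xhat_plus_ln u1 u2 : 0 <= u1 -> u1 <= u2 -> u2 < 1 -> z u1 = 1 -> z u2 = 1 ->
  RInt (fun q => / xhat z q) 0 u2 + ln (1 - u2) = RInt (fun q => / xhat z q) 0 u1 + ln (1 - u1).
Proof.
  intros H1 H12 H2 Hz1 Hz2.
  assert (E := ex_RInt_inv_xhat u2 ltac:(lra) Hz2).
  rewrite <- (RInt_Chasles_R _ 0 u1 u2) by (apply (ex_RInt_sub _ 0 u2); auto; lra).
  rewrite (RInt_ext (fun q => / xhat z q) (fun q => / (1 - q)) u1 u2).
  - rewrite RInt_inv_one_minus by lra. ring.
  - intros x Hx. rewrite Rmin_left, Rmax_right in Hx by lra. rewrite (xhat_one_minus u1 x); auto; lra.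
Qed.

Lemma Q_at_indep gamma h beta u1 u2 : 0 <= u1 < 1 -> z u1 = 1 -> 0 <= u2 < 1 -> z u2 = 1 ->
  Q_at gamma h beta z u1 = Q_at gamma h beta z u2.
Proof.
  intros Hu1 Hz1 Hu2 Hz2. unfold Q_at. rewrite !Rplus_assoc.
  destruct (Rle_dec u1 u2);
    [rewrite (RInt_inv_xhat_plus_ln u1 u2) | rewrite (RInt_inv_xhat_plus_ln u2 u1)]; auto; lra.
Qed.

Lemma Q_eq_Q_at gamma h beta u : 0 <= u < 1 -> z u = 1 -> Q gamma h beta z = Q_at gamma h beta z u.
Proof.
  intros Hu Hzu. unfold Q.
  destruct (epsilon_spec (inhabits 0) (fun qh => 0 <= qh < 1 /\ z qh = 1)) as [Hqh Hzqh];
    [exists u; auto|].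
  apply Q_at_indep; auto.
Qed.

End Xhat.

Section Main.

Variable y : R -> R -> R.
Variable alpha : R -> R.
Variables L delta : R.
Variable v : R -> R.
Hypothesis HyM : forall beta, 0 < beta -> inM (y beta).
Hypothesis Halpha_mono : forall s t, 0 <= s -> s <= t -> t < 1 -> alpha s <= alpha t.
Hypothesis Hvague : vague_cvg y alpha.
Hypothesis HL : is_lim (fun beta => RInt (fun s => beta * y beta s) 0 1) p_infty L.
Hypothesis Hv : forall beta, 0 < beta -> 0 <= v beta < 1 /\ y beta (v beta) = 1.
Hypothesis Hdelta : is_lim (fun beta => beta * (1 - v beta)) p_infty delta.
Hypothesis Hdelta_pos : 0 < delta.

Let f be s : R := be * y be s.
Let F be q : R := RInt (f be) 0 q.
Let A q : R := RInt alpha 0 q.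

Lemma y_mono be : 0 < be -> nondecreasing_on (y be) 0 1.
Proof. intros Hb. exact (proj1 (HyM be Hb)). Qed.

Lemma y_01 be : 0 < be -> forall s, 0 <= s <= 1 -> 0 <= y be s <= 1.
Proof. intros Hb. exact (proj1 (proj2 (HyM be Hb))). Qed.

Lemma y_eq_1 be : 0 < be -> forall t, v be <= t <= 1 -> y be t = 1.
Proof.
  intros Hb t Ht. destruct (Hv be Hb) as [Hv1 Hv2].
  assert (y be (v be) <= y be t) by (apply y_mono; lra). destruct (y_01 be Hb t ltac:(lra)). lra.
Qed.

Lemma f_mono be : 0 < be -> nondecreasing_on (f be) 0 1.
Proof. intros Hb s t Hs Hst Ht. apply Rmult_le_compat_l; [lra | apply y_mono; auto]. Qed.

Lemma f_nonneg be : 0 < be -> forall s, 0 <= s <= 1 -> 0 <= f be s.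
Proof. intros Hb s Hs. apply Rmult_le_pos; [lra | apply y_01; auto]. Qed.

Lemma f_le be : 0 < be -> forall s, 0 <= s <= 1 -> f be s <= be.
Proof. intros Hb s Hs. destruct (y_01 be Hb s Hs). unfold f. nra. Qed.

Lemma ex_RInt_f_sub be x z : 0 < be -> 0 <= x -> x <= z -> z <= 1 -> ex_RInt (f be) x z.
Proof. intros. apply (ex_RInt_f f f_mono); auto. Qed.

Lemma F_mono be : 0 < be -> nondecreasing_on (F be) 0 1.
Proof.
  intros Hb x z Hx Hxz Hz. unfold F.
  rewrite <- (RInt_Chasles_R (f be) 0 x z) by (apply ex_RInt_f_sub; auto; lra).
  assert (0 <= RInt (f be) x z); [|lra].
  apply RInt_ge_0; [lra | apply ex_RInt_f_sub; auto; lra | intros; apply f_nonneg; auto; lra].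
Qed.

Lemma F_nonneg be q : 0 < be -> 0 <= q <= 1 -> 0 <= F be q.
Proof.
  intros Hb Hq. pose proof (F_mono be Hb 0 q ltac:(lra) ltac:(lra) ltac:(lra)).
  unfold F in *. rewrite RInt_point in *. exact H.
Qed.

(* On [[v be, 1]] the function [f be] is identically [be]. *)
Lemma F_add_gap_le be q : 0 < be -> 0 <= q <= v be -> F be q + be * (1 - v be) <= F be 1.
Proof.
  intros Hb Hq. destruct (Hv be Hb) as [Hv1 _]. unfold F.
  rewrite <- (RInt_Chasles_R (f be) 0 (v be) 1) by (apply ex_RInt_f_sub; auto; lra).
  rewrite <- (RInt_Chasles_R (f be) 0 q (v be)) by (apply ex_RInt_f_sub; auto; lra).
  rewrite (RInt_ext (f be) (fun _ => be) (v be) 1), RInt_const_R.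
  - assert (0 <= RInt (f be) q (v be)); [|lra].
    apply RInt_ge_0; [lra | apply ex_RInt_f_sub; auto; lra | intros; apply f_nonneg; auto; lra].
  - intros x Hx. rewrite Rmin_left, Rmax_right in Hx by lra. unfold f. rewrite y_eq_1; auto; lra.
Qed.

Lemma eventually_v_gt c : c < 1 -> Rbar_locally p_infty (fun be => 0 < be /\ c < v be).
Proof.
  intros Hc.
  generalize (filter_and (F := Rbar_locally p_infty) _ _
    (proj1 (is_lim_p_infty_abs _ _) Hdelta 1 ltac:(lra)) (p_infty_gt ((delta + 1) / (1 - c)))).
  apply filter_imp. intros be [H1 H2]. apply Rabs_lt_between in H1.
  assert (0 < (delta + 1) / (1 - c)) by (apply Rdiv_lt_0_compat; lra).
  assert (delta + 1 < be * (1 - c)).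
  { apply Rmult_lt_reg_r with (/ (1 - c)); [apply Rinv_0_lt_compat; lra|].
    replace (be * (1 - c) * / (1 - c)) with be by (field; lra). exact H2. }
  split; nra.
Qed.

Lemma F_cvg q : 0 <= q < 1 -> is_lim (fun be => F be q) p_infty (A q).
Proof. apply (RInt_f_cvg f alpha f_mono f_nonneg Halpha_mono), Hvague. Qed.

Lemma alpha_nonneg s : 0 < s < 1 -> 0 <= alpha s.
Proof.
  intros Hs. destruct (cont_on_01_between alpha Halpha_mono 0 s) as [s' [Hs' Cs']]; try lra.
  assert (alpha s' <= alpha s) by (apply Halpha_mono; lra).
  assert (0 <= alpha s'); [|lra].
  apply (is_lim_le_loc (fun _ => 0) (fun be => f be s') p_infty 0 (alpha s')).
  - exists 0. intros be Hb. apply f_nonneg; lra.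
  - apply is_lim_const.
  - apply Hvague; [lra | exact Cs'].
Qed.

Lemma A_mono x z : 0 <= x -> x <= z -> z < 1 -> A x <= A z.
Proof.
  intros. unfold A. rewrite <- (RInt_Chasles_R alpha 0 x z) by (apply (ex_RInt_alpha alpha); auto; lra).
  assert (0 <= RInt alpha x z); [|lra].
  apply RInt_ge_0; [lra | apply (ex_RInt_alpha alpha); auto; lra | intros; apply alpha_nonneg; lra].
Qed.

Lemma A_nonneg q : 0 <= q < 1 -> 0 <= A q.
Proof.
  intros Hq. pose proof (A_mono 0 q ltac:(lra) ltac:(lra) ltac:(lra)) as H.
  unfold A in H at 1. rewrite RInt_point in H. exact H.
Qed.

Lemma A_le q : 0 <= q < 1 -> A q <= L - delta.
Proof.
  intros Hq. cut (Rbar_le (A q + delta) L); [simpl; lra|].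
  apply (is_lim_le_loc (fun be => F be q + be * (1 - v be)) (fun be => F be 1) p_infty).
  - generalize (eventually_v_gt q ltac:(lra)). apply filter_imp.
    intros be [Hb Hvb]. apply F_add_gap_le; lra.
  - apply (is_lim_plus' (fun be => F be q)); [apply F_cvg | apply Hdelta]; lra.
  - exact HL.
Qed.

Lemma delta_le_L : delta <= L.
Proof.
  pose proof (A_le 0 ltac:(lra)) as H. unfold A in H. rewrite RInt_point in H.
  unfold zero in H; simpl in H. lra.
Qed.

Lemma A_lipschitz c : 0 <= c < 1 -> forall x z, 0 <= x -> x <= z -> z <= c ->
  Rabs (A z - A x) <= Rabs (alpha c) * (z - x).
Proof.
  intros Hc x z Hx Hxz Hz. unfold A.
  rewrite <- (RInt_Chasles_R alpha 0 x z) by (apply (ex_RInt_alpha alpha); auto; lra).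
  replace (RInt alpha 0 x + RInt alpha x z - RInt alpha 0 x) with (RInt alpha x z)
    by (apply Rminus_diag_uniq; ring).
  destruct (alpha_RInt_bounds alpha Halpha_mono x z) as [_ Hup]; try lra.
  assert (alpha z <= Rabs (alpha c)) by (eapply Rle_trans; [apply Halpha_mono | apply Rle_abs]; lra).
  rewrite Rabs_right.
  - assert ((z - x) * alpha z <= (z - x) * Rabs (alpha c)) by (apply Rmult_le_compat_l; lra). lra.
  - apply Rle_ge, RInt_ge_0; [lra | apply (ex_RInt_alpha alpha); auto; lra|].
    intros; apply alpha_nonneg; lra.
Qed.

Lemma F_unif_cvg c : 0 <= c < 1 -> forall eps, 0 < eps ->
  Rbar_locally p_infty (fun be => forall q, 0 <= q <= c -> Rabs (F be q - A q) < eps).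
Proof.
  intros Hc. apply (unif_cvg_nondecreasing F A c (Rabs (alpha c))); [lra | apply Rabs_pos | | |].
  - intros be Hb. apply (nondecreasing_on_sub _ 0 1); [lra | lra | apply F_mono; exact Hb].
  - apply A_lipschitz; exact Hc.
  - intros q Hq. apply F_cvg. lra.
Qed.

Lemma ex_RInt_mult_F (w' : R -> R) be : (forall x, 0 <= x <= 1 -> 0 <= w' x) ->
  nondecreasing_on w' 0 1 -> 0 < be -> ex_RInt (fun q => w' q * F be q) 0 1.
Proof.
  intros Hp Hm Hb. apply ex_RInt_nondecreasing; [lra|].
  apply nondecreasing_on_mult; auto; [apply F_mono; auto | intros; apply F_nonneg; auto].
Qed.

Lemma ex_RInt_mult_A (w' : R -> R) : (forall x, 0 <= x <= 1 -> 0 <= w' x) ->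
  nondecreasing_on w' 0 1 -> ex_RInt (fun q => w' q * A q) 0 1.
Proof.
  intros Hp Hm. apply (ex_RInt_nondecreasing_bounded _ 0 1 (w' 1 * (L - delta))); [lra | |].
  - intros x z Hx Hxz Hz. apply Rmult_le_compat; [apply Hp; lra | apply A_nonneg; lra | apply Hm; lra |].
    apply A_mono; lra.
  - intros x Hx. apply Rmult_le_compat; [apply Hp; lra | apply A_nonneg; lra | apply Hm; lra |].
    apply A_le; lra.
Qed.

Lemma is_lim_RInt_mult_F (w' : R -> R) : (forall x, 0 <= x <= 1 -> 0 <= w' x) ->
  nondecreasing_on w' 0 1 ->
  is_lim (fun be => RInt (fun q => w' q * F be q) 0 1) p_infty (RInt (fun q => w' q * A q) 0 1).
Proof.
  intros Hp Hm. pose proof delta_le_L.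
  assert (HK : 0 <= w' 1) by (apply Hp; lra).
  apply (is_lim_RInt_unif_on_compacts (fun be q => w' q * F be q) (fun q => w' q * A q)
           (fun _ => 1) (w' 1 * (L + 1))).
  - intros c Hc. exists 0. intros; lra.
  - generalize (filter_and (F := Rbar_locally p_infty) _ _ (p_infty_gt 0)
      (proj1 (is_lim_p_infty_abs _ _) HL 1 ltac:(lra))).
    apply filter_imp. intros be [Hb HF1]. split; [apply ex_RInt_mult_F; auto|].
    intros q Hq. apply Rabs_lt_between in HF1. fold (f be) (F be 1) in HF1.
    rewrite Rabs_right by (apply Rle_ge, Rmult_le_pos; [apply Hp | apply F_nonneg]; auto).
    apply Rmult_le_compat; [apply Hp; auto | apply F_nonneg; auto | apply Hm; lra |].
    pose proof (F_mono be Hb q 1 ltac:(lra) ltac:(lra) ltac:(lra)). lra.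
  - apply ex_RInt_mult_A; auto.
  - intros q Hq.
    rewrite Rabs_right by (apply Rle_ge, Rmult_le_pos; [apply Hp; lra | apply A_nonneg; lra]).
    apply Rmult_le_compat; [apply Hp; lra | apply A_nonneg; lra | apply Hm; lra |].
    pose proof (A_le q Hq). lra.
  - intros c Hc eps He.
    assert (He' : 0 < eps / (w' 1 + 1)) by (apply Rdiv_lt_0_compat; lra).
    generalize (F_unif_cvg c Hc _ He'). apply filter_imp. intros be Hbe q Hq.
    replace (w' q * F be q - w' q * A q) with (w' q * (F be q - A q)) by ring.
    rewrite Rabs_mult, (Rabs_right (w' q)) by (apply Rle_ge, Hp; lra).
    apply Rle_lt_trans with (w' 1 * (eps / (w' 1 + 1))).
    + apply Rmult_le_compat; [apply Hp; lra | apply Rabs_pos | apply Hm; lra | left; apply Hbe; lra].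
    + apply Rmult_lt_reg_r with (w' 1 + 1); [lra|].
      replace (w' 1 * (eps / (w' 1 + 1)) * (w' 1 + 1)) with (w' 1 * eps) by (field; lra). nra.
Qed.

Lemma is_lim_RInt_weighted_f (w w' : R -> R) :
  (forall x, 0 <= x <= 1 -> is_derive w x (w' x)) ->
  (forall x, 0 <= x <= 1 -> continuous w' x) ->
  (forall x, 0 <= x <= 1 -> 0 <= w x) -> nondecreasing_on w 0 1 ->
  (forall x, 0 <= x <= 1 -> 0 <= w' x) -> nondecreasing_on w' 0 1 ->
  is_lim (fun be => RInt (fun q => w q * f be q) 0 1) p_infty
    (w 1 * L - RInt (fun q => w' q * A q) 0 1).
Proof.
  intros Hd Hc Hwp Hwm Hw'p Hw'm.
  apply (is_lim_ext_loc (fun be => w 1 * F be 1 - RInt (fun q => w' q * F be q) 0 1)).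
  - exists 0. intros be Hb. symmetry.
    apply (RInt_by_parts w w' (f be) 0 1 be (w' 1)); auto; try lra.
    + intros x Hx. rewrite Rabs_right by (apply Rle_ge, Hw'p; lra). apply Hw'm; lra.
    + apply ex_RInt_f_sub; lra.
    + intros x Hx. rewrite Rabs_right by (apply Rle_ge, f_nonneg; lra). apply f_le; lra.
    + apply ex_RInt_nondecreasing; [lra|].
      apply nondecreasing_on_mult; auto; [apply f_mono; lra | intros; apply f_nonneg; lra].
    + apply ex_RInt_mult_F; auto.
  - apply (is_lim_minus' (fun be => w 1 * F be 1)); [|apply is_lim_RInt_mult_F; auto].
    exact (is_lim_scal_l _ (w 1) p_infty L HL).
Qed.

Lemma Rabs_inv_sub_le (X Y d : R) : 0 < d -> d / 2 <= X -> d <= Y ->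
  Rabs (/ X - / Y) <= Rabs (Y - X) * (2 / d) * (1 / d).
Proof.
  intros Hd HX HY.
  replace (/ X - / Y) with ((Y - X) * / X * / Y) by (field; lra).
  rewrite !Rabs_mult, (Rabs_right (/ X)), (Rabs_right (/ Y)) by (left; apply Rinv_0_lt_compat; lra).
  apply Rmult_le_compat; try (apply Rmult_le_pos); try apply Rabs_pos;
    try (left; apply Rinv_0_lt_compat; lra).
  - apply Rmult_le_compat_l; [apply Rabs_pos|].
    replace (2 / d) with (/ (d / 2)) by (field; lra). apply Rinv_le_contravar; lra.
  - replace (1 / d) with (/ d) by (field; lra). apply Rinv_le_contravar; lra.
Qed.

Lemma eventually_gap_ge : Rbar_locally p_infty (fun be =>
  0 < be /\ forall q, 0 <= q <= v be -> delta / 2 <= F be 1 - F be q).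
Proof.
  generalize (filter_and (F := Rbar_locally p_infty) _ _ (p_infty_gt 0)
    (proj1 (is_lim_p_infty_abs _ _) Hdelta (delta / 2) ltac:(lra))).
  apply filter_imp. intros be [Hb Hd]. split; [exact Hb|]. intros q Hq.
  apply Rabs_lt_between in Hd. pose proof (F_add_gap_le be q Hb Hq). lra.
Qed.

Lemma ex_RInt_inv_gap be : 0 < be -> ex_RInt (fun q => / (F be 1 - F be q)) 0 (v be).
Proof.
  intros Hb. destruct (Hv be Hb) as [Hv1 _].
  assert (Hpos : forall q, 0 <= q <= v be -> 0 < F be 1 - F be q).
  { intros q Hq. pose proof (F_add_gap_le be q Hb Hq). assert (0 < be * (1 - v be)) by nra. lra. }
  apply ex_RInt_nondecreasing; [lra|]. intros x z Hx Hxz Hz.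
  pose proof (Hpos x ltac:(lra)). pose proof (Hpos z ltac:(lra)).
  apply Rinv_le_contravar; [lra|]. pose proof (F_mono be Hb x z ltac:(lra) ltac:(lra) ltac:(lra)). lra.
Qed.

Lemma is_lim_RInt_inv_gap :
  is_lim (fun be => RInt (fun q => / (F be 1 - F be q)) 0 (v be)) p_infty
    (RInt (fun q => / (L - A q)) 0 1).
Proof.
  pose proof delta_le_L.
  apply (is_lim_RInt_unif_on_compacts (fun be q => / (F be 1 - F be q)) (fun q => / (L - A q))
           v (2 / delta)).
  - intros c Hc. generalize (eventually_v_gt c Hc). apply filter_imp.
    intros be [Hb Hvb]. pose proof (Hv be Hb). lra.
  - generalize eventually_gap_ge. apply filter_imp. intros be [Hb Hgap].
    split; [apply ex_RInt_inv_gap; exact Hb|].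
    intros q Hq. pose proof (Hgap q Hq).
    rewrite Rabs_right by (left; apply Rinv_0_lt_compat; lra).
    replace (2 / delta) with (/ (delta / 2)) by (field; lra). apply Rinv_le_contravar; lra.
  - apply (ex_RInt_nondecreasing_bounded _ 0 1 (/ delta)); [lra | |].
    + intros x z Hx Hxz Hz. pose proof (A_le x ltac:(lra)). pose proof (A_le z ltac:(lra)).
      apply Rinv_le_contravar; [lra|]. pose proof (A_mono x z Hx Hxz Hz). lra.
    + intros x Hx. pose proof (A_le x Hx). apply Rinv_le_contravar; lra.
  - intros q Hq. pose proof (A_le q Hq).
    rewrite Rabs_right by (left; apply Rinv_0_lt_compat; lra).
    apply Rle_trans with (/ delta); [apply Rinv_le_contravar; lra|].
    unfold Rdiv. assert (0 < / delta) by (apply Rinv_0_lt_compat; lra). lra.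
  - intros c Hc eps He.
    set (e1 := eps * delta ^ 2 / 4).
    assert (He1 : 0 < e1).
    { assert (0 < delta ^ 2) by (apply pow_lt; lra).
      unfold e1; apply Rdiv_lt_0_compat; [apply Rmult_lt_0_compat|]; lra. }
    generalize (filter_and (F := Rbar_locally p_infty) _ _ (F_unif_cvg c Hc e1 He1)
      (filter_and (F := Rbar_locally p_infty) _ _ (proj1 (is_lim_p_infty_abs _ _) HL e1 He1)
      (filter_and (F := Rbar_locally p_infty) _ _ eventually_gap_ge (eventually_v_gt c ltac:(lra))))).
    apply filter_imp. intros be [HU [HF1 [[Hb Hgap] [_ Hvc]]]] q Hq.
    fold (f be) (F be 1) in HF1.
    eapply Rle_lt_trans.
    { apply Rabs_inv_sub_le; [exact Hdelta_pos | apply Hgap; lra |].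
      pose proof (A_le q ltac:(lra)). lra. }
    assert (Rabs (L - A q - (F be 1 - F be q)) < 2 * e1).
    { replace (L - A q - (F be 1 - F be q)) with ((F be q - A q) - (F be 1 - L)) by ring.
      eapply Rle_lt_trans; [apply Rabs_triang|]. rewrite Rabs_Ropp. pose proof (HU q Hq). lra. }
    replace eps with (2 * e1 * (2 / delta) * (1 / delta)) by (unfold e1; field; lra).
    apply Rmult_lt_compat_r; [apply Rdiv_lt_0_compat; lra|].
    apply Rmult_lt_compat_r; [apply Rdiv_lt_0_compat; lra | exact H0].
Qed.

Lemma is_lim_ln_gap : is_lim (fun be => ln (1 - v be) / be) p_infty 0.
Proof.
  apply (is_lim_ext_loc (fun be => ln (be * (1 - v be)) * / be - ln be / be)).
  - exists 0. intros be Hb. destruct (Hv be Hb) as [Hv1 _].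
    rewrite ln_mult by lra. unfold Rdiv. ring.
  - replace (Finite 0) with (Finite (ln delta * 0 - 0)) by (f_equal; ring).
    apply is_lim_minus'; [|exact is_lim_div_ln_p].
    apply (is_lim_mult _ _ p_infty (ln delta) 0); [| |exact I].
    + apply is_lim_comp_continuous; [exact Hdelta | apply continuous_ln; exact Hdelta_pos].
    + exact (is_lim_inv _ p_infty p_infty (is_lim_id p_infty) ltac:(discriminate)).
Qed.

Lemma Q_over_beta_eq gamma h :
  ex_series (fun p => if (p <? 2)%nat then 0 else 2 ^ p * (gamma p) ^ 2) ->
  forall be, 0 < be ->
  Q gamma h be (y be) / be =
  / 2 * (RInt (fun q => (PSeries (PS_derive (xi_coef gamma)) q + h ^ 2) * f be q) 0 1
         + RInt (fun q => / (F be 1 - F be q)) 0 (v be)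
         + ln (1 - v be) / be).
Proof.
  intros Hg be Hb. destruct (Hv be Hb) as [Hv1 Hv2].
  rewrite (Q_eq_Q_at (y be) (y_mono be Hb) (y_01 be Hb) gamma h be (v be) Hv1 Hv2). unfold Q_at.
  destruct (xi1_nonneg_nondecreasing gamma Hg) as [Hxi1p Hxi1m].
  assert (R1 : RInt (fun q => (Derive (xi_beta gamma be) q + h_beta h be ^ 2) * y be q) 0 1
             = be * RInt (fun q => (PSeries (PS_derive (xi_coef gamma)) q + h ^ 2) * f be q) 0 1).
  { rewrite <- RInt_scal_R.
    - apply RInt_ext. intros x Hx. rewrite Rmin_left, Rmax_right in Hx by lra.
      unfold xi_beta. rewrite Derive_scal, (Derive_xi gamma Hg) by (rewrite Rabs_right; lra).
      unfold h_beta, f. apply Rminus_diag_uniq. ring.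
    - apply ex_RInt_nondecreasing; [lra|]. apply nondecreasing_on_mult.
      + intros x z Hx Hxz Hz. pose proof (Hxi1m x z Hx Hxz Hz). lra.
      + apply f_mono, Hb.
      + intros x Hx. pose proof (Hxi1p x Hx). pose proof (pow2_ge_0 h). lra.
      + apply f_nonneg, Hb. }
  assert (Hgap : forall x, 0 <= x <= v be -> F be 1 - F be x = be * xhat (y be) x).
  { intros x Hx. unfold xhat, F.
    rewrite <- (RInt_Chasles_R (f be) 0 x 1) by (apply ex_RInt_f_sub; lra).
    unfold f. rewrite (RInt_scal_R (y be) x 1); [ring|].
    apply ex_RInt_nondecreasing; [lra|].
    apply (nondecreasing_on_sub _ 0 1); [lra | lra | apply y_mono, Hb]. }
  assert (R2 : RInt (fun q => / xhat (y be) q) 0 (v be)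
             = be * RInt (fun q => / (F be 1 - F be q)) 0 (v be)).
  { rewrite <- RInt_scal_R by (apply ex_RInt_inv_gap; exact Hb).
    apply RInt_ext. intros x Hx. rewrite Rmin_left, Rmax_right in Hx by lra.
    pose proof (F_add_gap_le be x Hb ltac:(lra)). assert (0 < be * (1 - v be)) by nra.
    assert (Hx' := Hgap x ltac:(lra)).
    assert (0 < xhat (y be) x) by (apply (Rmult_lt_reg_l be); lra).
    cbv beta. rewrite Hx'. apply Rminus_diag_uniq. field. split; lra. }
  rewrite R1, R2. field. lra.
Qed.

End Main.

Theorem lemma5 (gamma : nat -> R) (h : R)
  (Hgamma : ex_series (fun p => if (p <? 2)%nat then 0 else 2 ^ p * (gamma p) ^ 2))
  (y : R -> R -> R) (alpha : R -> R) (L delta : R) (v : R -> R)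
  (HyM : forall beta, 0 < beta -> inM (y beta))
  (Halpha_mono : forall s t, 0 <= s -> s <= t -> t < 1 -> alpha s <= alpha t)
  (Hvague : vague_cvg y alpha)
  (HL : is_lim (fun beta => RInt (fun s => beta * y beta s) 0 1) p_infty L)
  (Hv : forall beta, 0 < beta -> 0 <= v beta < 1 /\ y beta (v beta) = 1)
  (Hdelta : is_lim (fun beta => beta * (1 - v beta)) p_infty delta)
  (Hdelta_pos : 0 < delta) :
  is_lim (fun beta => Q gamma h beta (y beta) / beta) p_infty
    (/ 2 * ( (Derive (xi gamma) 1 + h ^ 2) * L
           - RInt (fun q => Derive (Derive (xi gamma)) q * RInt alpha 0 q) 0 1
           + RInt (fun q => / (L - RInt alpha 0 q)) 0 1 )).
Proof.
  destruct (xi1_nonneg_nondecreasing gamma Hgamma) as [Hxi1p Hxi1m].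
  destruct (xi2_nonneg_nondecreasing gamma Hgamma) as [Hxi2p Hxi2m].
  set (xi1 := PS_derive (xi_coef gamma)) in *. set (xi2 := PS_derive xi1) in *.
  rewrite (Derive_xi gamma Hgamma 1) by (rewrite Rabs_R1; lra).
  rewrite (RInt_ext _ (fun q => PSeries xi2 q * RInt alpha 0 q)).
  2: { intros x Hx. rewrite Rmin_left, Rmax_right in Hx by lra.
       rewrite (Derive2_xi gamma Hgamma) by (rewrite Rabs_right; lra). reflexivity. }
  eapply is_lim_ext_loc.
  { exists 0. intros be Hb. symmetry. apply (Q_over_beta_eq y v HyM Hv gamma h Hgamma be Hb). }
  rewrite <- (Rplus_0_r (_ - _ + _)).
  apply (is_lim_scal_l _ (/ 2) p_infty (_ + _ + 0)).
  apply is_lim_plus'; [apply is_lim_plus'|].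
  - apply (is_lim_RInt_weighted_f y alpha L delta v HyM Halpha_mono Hvague HL Hv Hdelta Hdelta_pos
             (fun q => PSeries xi1 q + h ^ 2) (PSeries xi2)).
    + intros x Hx. apply is_derive_xi1_shift; [exact Hgamma | rewrite Rabs_right; lra].
    + intros x Hx. apply continuous_xi2; [exact Hgamma | rewrite Rabs_right; lra].
    + intros x Hx. pose proof (Hxi1p x Hx). pose proof (pow2_ge_0 h). lra.
    + intros x z Hx Hxz Hz. pose proof (Hxi1m x z Hx Hxz Hz). lra.
    + exact Hxi2p.
    + exact Hxi2m.
  - exact (is_lim_RInt_inv_gap y alpha L delta v HyM Halpha_mono Hvague HL Hv Hdelta Hdelta_pos).
  - exact (is_lim_ln_gap y delta v Hv Hdelta Hdelta_pos).
Qed.
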